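(* Let $\mathbf P$ be the edge-probability matrix of a directed stochastic block model with $K_n$ communities, community-probability vector $\boldsymbol\rho$ with $\rho_{\min}=\min_k\rho_k>0$, block matrix $\mathbf B$ with pairwise distinct rows, and sparsity factor $\gamma_n$. Let $E_{\min}=n\rho_{\min}/2$ and $L_n=2\exp\big\{-\frac{\frac12(\frac{\rho_{\min}}2)^2n}{1+\frac13(\frac{\rho_{\min}}2)}\big\}$. Then $$\mathbb P\left(d_{\mathbf P}^*>\gamma_n\sqrt{E_{\min}}\,d_{\mathbf B}^*\right)\ge1-\binom{K_n}{2}K_nL_n.$$ Moreover, if $\frac{n\rho_{\min}^2}{8(1+\frac16\rho_{\min})}-\log\big(K_n^2(K_n-1)\big)\to\infty$ as $n\to\infty$, then this lower bound converges to $1$.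
   Context: Model: nodes $[n]$; labels $Z_1,\dots,Z_n$ i.i.d. Categorical$(\boldsymbol\rho)$ on $[K_n]$, $\pi(i)=Z_i$; $\mathbf B\in[0,1]^{K_n\times K_n}$; $\gamma_n\in(0,1]$; $P_{ij}=\gamma_nB_{\pi(i)\pi(j)}$ for all $i,j\in[n]$ (including $i=j$). $d_{\mathbf B}^*=\min_{a\ne b}\|\mathbf B_{a\cdot}-\mathbf B_{b\cdot}\|_2$ and $d_{\mathbf P}^*=\min\{\|\mathbf P_{i\cdot}-\mathbf P_{j\cdot}\|_2: i,j\in[n],\ \pi(i)\ne\pi(j)\}$. $\boldsymbol\rho$, $K_n$, $\mathbf B$, $\gamma_n$ may depend on $n$. *)

From HB Require Import structures.
From mathcomp Require Import all_boot all_order all_algebra.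
From mathcomp Require Import all_classical all_reals all_analysis.
Set Implicit Arguments. Unset Strict Implicit. Unset Printing Implicit Defensive.
Import Order.TTheory GRing.Theory Num.Theory.
Local Open Scope ring_scope.

Section SBM.
Variable R : realType.

Definition rho_min (K : nat) (rho : 'I_K -> R) : R :=
  fine (\big[mine/+oo%E]_(k < K) (rho k)%:E).

Definition Pmat (n K : nat) (gamma : R) (B : 'M[R]_K) (z : {ffun 'I_n -> 'I_K})
  (i j : 'I_n) : R := gamma * B (z i) (z j).

Definition rowdistP (n K : nat) (gamma : R) (B : 'M[R]_K) (z : {ffun 'I_n -> 'I_K})
  (i j : 'I_n) : R :=
  Num.sqrt (\sum_(l < n) (Pmat gamma B z i l - Pmat gamma B z j l) ^+ 2).

Definition dPstar (n K : nat) (gamma : R) (B : 'M[R]_K) (z : {ffun 'I_n -> 'I_K})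
  : \bar R :=
  \big[mine/+oo%E]_(ij : 'I_n * 'I_n | z ij.1 != z ij.2)
     (rowdistP gamma B z ij.1 ij.2)%:E.

Definition dBstar (K : nat) (B : 'M[R]_K) : \bar R :=
  \big[mine/+oo%E]_(ab : 'I_K * 'I_K | ab.1 != ab.2)
     (Num.sqrt (\sum_(k < K) (B ab.1 k - B ab.2 k) ^+ 2))%:E.

(* Probability of an event on the labels, when Z_1..Z_n are i.i.d. Categorical(rho):
   the joint law of (Z_1,...,Z_n) on [K]^n is the product law. *)
Definition label_prob (n K : nat) (rho : 'I_K -> R) (E : pred {ffun 'I_n -> 'I_K}) : R :=
  \sum_(z : {ffun 'I_n -> 'I_K} | E z) \prod_(i < n) rho (z i).

Definition Emin (n : nat) (rmin : R) : R := n%:R * rmin / 2.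

Definition Ln (n : nat) (rmin : R) : R :=
  2 * expR (- ((1 / 2) * (rmin / 2) ^+ 2 * n%:R / (1 + (1 / 3) * (rmin / 2)))).

Definition lower_bound (n K : nat) (rmin : R) : R :=
  1 - 'C(K, 2)%:R * K%:R * Ln n rmin.

End SBM.

From HB Require Import structures.
From mathcomp Require Import all_boot all_order all_algebra.
From mathcomp Require Import all_classical all_reals all_analysis.
From mathcomp Require Import lra ring.
Import Order.TTheory GRing.Theory Num.Theory.
Import numFieldNormedType.Exports.
Local Open Scope classical_set_scope.
Local Open Scope ring_scope.

Set Implicit Arguments. Unset Strict Implicit. Unset Printing Implicit Defensive.

(* Write n_c for the size of community c.  If n_c > E_min for every c, then for
   nodes i, j in different communities a = pi(i), b = pi(j),
     ||P_i. - P_j.||^2 = gamma^2 sum_c n_c (B_ac - B_bc)^2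
                       > gamma^2 E_min ||B_a. - B_b.||^2 >= gamma^2 E_min d_B*^2,
   strictly because the rows a and b of B differ.  Since n_c ~ Bin(n, rho_c) with
   rho_c >= rho_min, Chernoff's bound gives P(n_c <= E_min) <= exp(-n rho_min^2 / 8),
   which is at most L_n; a union bound over the K communities, and K <= C(K,2) K,
   give the estimate.  Finally C(K,2) K L_n = exp(-(x_n - log(K^2 (K-1)))), where
   x_n = n rho_min^2 / (8 (1 + rho_min / 6)), which yields the limit. *)

Section Exponential.
Variable R : realType.

Lemma expR_ge_taylor2 (x : R) : 0 <= x -> 1 + x + x ^+ 2 / 2 <= expR x.
Proof.
move=> x0; rewrite /expR.
apply: le_trans (nondecreasing_cvgn_le _ (is_cvg_series_exp_coeff x) 3).
- rewrite /series /= !big_nat_recr //= big_nil /exp_coeff /= !factS fact0 /=.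
  by rewrite expr0 expr1 !divr1 add0r.
- by apply: nondecreasing_series => k _; rewrite divr_ge0 // exprn_ge0.
Qed.

Lemma expRN_le_taylor2 (x : R) : 0 <= x -> expR (- x) <= 1 - x + x ^+ 2 / 2.
Proof.
move=> x0; have taylor := expR_ge_taylor2 x0.
have sq0 : 0 <= x ^+ 2 / 2 by rewrite divr_ge0 // exprn_ge0.
have pos : 0 < 1 + x + x ^+ 2 / 2 by lra.
rewrite expRN (le_trans (_ : _ <= (1 + x + x ^+ 2 / 2)^-1)) ?lef_pV2 ?posrE //.
  exact: lt_le_trans taylor.
rewrite -[X in X <= _]div1r ler_pdivrMr //.
have -> : (1 - x + x ^+ 2 / 2) * (1 + x + x ^+ 2 / 2) = 1 + x ^+ 4 / 4.
  by rewrite !exprS expr0; field.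
by rewrite lerDl divr_ge0 // exprn_ge0.
Qed.

Lemma expr1B_le_expR (x : R) (n : nat) : x <= 1 -> (1 - x) ^+ n <= expR (- (n%:R * x)).
Proof.
move=> x1; rewrite -mulrN expRM_natl; apply: lerXn2r; rewrite ?nnegrE ?expR_ge0 //.
  by rewrite subr_ge0.
exact: expR_ge1Dx.
Qed.

End Exponential.

Section CommunitySizes.
Variables (R : realType) (n K : nat).

Definition community_size (z : {ffun 'I_n -> 'I_K}) (c : 'I_K) : R :=
  \sum_(i < n) (z i == c)%:R.

Lemma sum_by_community (z : {ffun 'I_n -> 'I_K}) (h : 'I_K -> R) :
  \sum_(i < n) h (z i) = \sum_(c < K) community_size z c * h c.
Proof.
under [RHS]eq_bigr => c _ do rewrite mulr_suml.
rewrite exchange_big /=; apply: eq_bigr => i _.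
rewrite (bigD1 (z i)) //= eqxx mul1r big1 ?addr0 // => c /negbTE.
by rewrite eq_sym => ->; rewrite mul0r.
Qed.

Variable rho : 'I_K -> R.
Hypothesis rho_ge0 : forall k, 0 <= rho k.
Hypothesis rho_sum1 : \sum_(k < K) rho k = 1.

Lemma label_probT : label_prob rho (predT : pred {ffun 'I_n -> 'I_K}) = 1.
Proof.
rewrite /label_prob -(bigA_distr_bigA (fun (i : 'I_n) k => rho k)) /= rho_sum1.
exact: big1.
Qed.

Lemma label_probC (E : pred {ffun 'I_n -> 'I_K}) :
  label_prob rho E = 1 - label_prob rho (predC E).
Proof. by rewrite -label_probT /label_prob (bigID E predT) /= addrK. Qed.

Lemma label_prob_union_bound (E : pred {ffun 'I_n -> 'I_K})
    (F : 'I_K -> pred {ffun 'I_n -> 'I_K}) :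
  (forall z, ~~ E z -> exists c, F c z) ->
  label_prob rho (predC E) <= \sum_(c < K) label_prob rho (F c).
Proof.
move=> cover; rewrite /label_prob.
under [leRHS]eq_bigr do rewrite big_mkcond.
rewrite exchange_big /= [leLHS]big_mkcond; apply: ler_sum => z _.
have w_ge0 : 0 <= \prod_(i < n) rho (z i) by apply: prodr_ge0.
have terms_ge0 c : 0 <= (if F c z then \prod_(i < n) rho (z i) else 0).
  by case: ifP.
case: ifP => [/cover [c Fcz] | _]; last exact: sumr_ge0.
by rewrite (bigD1 c) //= Fcz lerDl sumr_ge0.
Qed.

Lemma community_size_chernoff (c : 'I_K) (m lam : R) : 0 <= lam ->
  label_prob rho (fun z => community_size z c <= m) <=
  expR (lam * m) * (1 - rho c * (1 - expR (- lam))) ^+ n.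
Proof.
move=> lam0; rewrite /label_prob big_mkcond /=.
pose w (z : {ffun 'I_n -> 'I_K}) := \prod_(i < n) rho (z i).
have w_ge0 z : 0 <= w z by apply: prodr_ge0.
apply: (@le_trans _ _ (\sum_z w z * expR (lam * (m - community_size z c)))).
  apply: ler_sum => z _; case: ifP => small; last by rewrite mulr_ge0 ?expR_ge0.
  rewrite ler_peMr ?(w_ge0 z) //.
  by rewrite -expR0 ler_expR mulr_ge0 // subr_ge0.
have factorise z : w z * expR (lam * (m - community_size z c)) =
    expR (lam * m) * \prod_(i < n) (rho (z i) * expR (- lam * (z i == c)%:R)).
  rewrite big_split /= mulrCA mulrBr expRD /community_size mulr_sumr -sumrN.
  by rewrite expR_sum; congr (_ * (_ * _)); apply: eq_bigr => i _; rewrite mulNr.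
rewrite (eq_bigr _ (fun z _ => factorise z)) -mulr_sumr.
rewrite -(bigA_distr_bigA (fun (i : 'I_n) k => rho k * expR (- lam * (k == c)%:R))) /=.
rewrite prodr_const card_ord (bigD1 c) //= eqxx mulr1.
rewrite (eq_bigr rho) => [|k /negbTE ->]; last by rewrite mulr0 expR0 mulr1.
have -> : \sum_(k < K | k != c) rho k = 1 - rho c.
  by rewrite -rho_sum1 [in RHS](bigD1 c) //=; ring.
suff -> : rho c * expR (- lam) + (1 - rho c) = 1 - rho c * (1 - expR (- lam)) by [].
ring.
Qed.

Lemma rho_le1 (c : 'I_K) : rho c <= 1.
Proof. by rewrite -rho_sum1 (bigD1 c) //= lerDl sumr_ge0. Qed.

Lemma community_size_tail (c : 'I_K) (rm : R) : 0 < rm -> rm <= rho c ->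
  label_prob rho (fun z => community_size z c <= Emin n rm) <=
  expR (- (n%:R * rm ^+ 2 / 8)).
Proof.
move=> rm_gt0 rm_le.
have lam0 : 0 <= rm / 2 by rewrite divr_ge0 // ltW.
apply: le_trans (community_size_chernoff c (Emin n rm) lam0) _.
have p1 := rho_le1 c.
set p := rho c in rm_le p1 *; set e := expR (- (rm / 2)).
have e_gt0 : 0 < e by exact: expR_gt0.
have e_le : e <= 1 - rm / 2 + (rm / 2) ^+ 2 / 2 by exact: expRN_le_taylor2.
have rm1 : rm <= 1 by lra.
have gap : 3 * rm ^+ 2 / 8 <= p * (1 - e).
  have lin0 : 0 <= rm / 2 - (rm / 2) ^+ 2 / 2 by nra.
  have : p * (rm / 2 - (rm / 2) ^+ 2 / 2) <= p * (1 - e).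
    by rewrite ler_wpM2l ?rho_ge0 //; lra.
  have : rm * (rm / 2 - (rm / 2) ^+ 2 / 2) <= p * (rm / 2 - (rm / 2) ^+ 2 / 2).
    by rewrite ler_wpM2r.
  have : 0 <= rm ^+ 2 * (1 - rm) by rewrite mulr_ge0 ?sqr_ge0 ?subr_ge0.
  nra.
apply: le_trans (ler_wpM2l (expR_ge0 _) (expr1B_le_expR n _)) _; first nra.
rewrite -expRD ler_expR /Emin.
have : 0 <= n%:R :> R by [].
nra.
Qed.

End CommunitySizes.

Arguments community_size {R n K} z c.

Section RowSeparation.
Variable R : realType.

Lemma ltr_weighted_sum (I : finType) (m : R) (w x : I -> R) :
  (forall i, m < w i) -> (forall i, 0 <= x i) -> (exists i, 0 < x i) ->
  m * \sum_i x i < \sum_i w i * x i.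
Proof.
move=> mw x_ge0 [k xk]; rewrite -subr_gt0 mulr_sumr -sumrB (bigD1 k) //=.
rewrite -mulrBl ltr_pwDl ?mulr_gt0 ?subr_gt0 //.
by apply: sumr_ge0 => i _; rewrite -mulrBl mulr_ge0 // subr_ge0 ltW.
Qed.

Variables (n K : nat) (gamma : R) (B : 'M[R]_K) (z : {ffun 'I_n -> 'I_K}).

Lemma dBstar_le (a b : 'I_K) : a != b ->
  (dBstar B <= (Num.sqrt (\sum_(k < K) (B a k - B b k) ^+ 2))%:E)%E.
Proof. by move=> ab; rewrite /dBstar (bigD1 (a, b)) //= ge_min lexx. Qed.

Lemma rowdistPE (i j : 'I_n) : 0 <= gamma ->
  rowdistP gamma B z i j =
  gamma * Num.sqrt (\sum_(c < K) community_size z c * (B (z i) c - B (z j) c) ^+ 2).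
Proof.
move=> gamma0; rewrite /rowdistP /Pmat -sum_by_community.
under eq_bigr do rewrite -mulrBr exprMn.
by rewrite -mulr_sumr sqrtrM ?sqr_ge0 // sqrtr_sqr ger0_norm.
Qed.

Lemma row_neq_exists (a b : 'I_K) : row a B != row b B -> exists k, B a k != B b k.
Proof.
move=> /eqP ab; apply/existsP; apply: contraNT (introN eqP ab) => /existsPn same.
by apply/eqP/rowP => k; rewrite !mxE; apply/eqP; rewrite -[_ == _]negbK same.
Qed.

Lemma dBstar_lt_dPstar (m : R) : (1 < K)%N -> 0 < gamma -> 0 <= m ->
  (forall a b : 'I_K, a != b -> row a B != row b B) ->
  (forall c, m < community_size z c) ->
  ((gamma * Num.sqrt m)%:E * dBstar B < dPstar gamma B z)%E.
Proof.
move=> K_gt1 gamma_gt0 m0 rowsB big.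
pose D (a b : 'I_K) := \sum_(k < K) (B a k - B b k) ^+ 2.
have scaled_le a b : a != b ->
    ((gamma * Num.sqrt m)%:E * dBstar B <= (gamma * Num.sqrt m * Num.sqrt (D a b))%:E)%E.
  move=> ab; rewrite [X in (_ <= X)%E]EFinM lee_wpmul2l ?dBstar_le // lee_fin.
  by rewrite mulr_ge0 ?sqrtr_ge0 // ltW.
rewrite /dPstar; apply: (big_ind (fun y => _ < y)%E).
- apply: le_lt_trans (scaled_le (Ordinal (ltnW K_gt1)) (Ordinal K_gt1) _) _ => //.
  exact: ltey.
- by move=> x y xl yl; rewrite lt_min xl yl.
move=> [i j] /= zij.
have sep : m * D (z i) (z j) <
    \sum_(c < K) community_size z c * (B (z i) c - B (z j) c) ^+ 2.
  apply: ltr_weighted_sum => // [c|]; first exact: sqr_ge0.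
  have [k /negPf nk] := row_neq_exists (rowsB _ _ zij).
  by exists k; rewrite lt_def sqr_ge0 andbT sqrf_eq0 subr_eq0 nk.
have D0 : 0 <= m * D (z i) (z j) by rewrite mulr_ge0 // sumr_ge0 // => k _; exact: sqr_ge0.
apply: le_lt_trans (scaled_le _ _ zij) _.
rewrite lte_fin rowdistPE ?ltW // -mulrA ltr_pM2l // -sqrtrM // ltr_sqrt //.
exact: le_lt_trans sep.
Qed.

End RowSeparation.

Section LowerBound.
Variable R : realType.

Lemma rho_min_le (K : nat) (rho : 'I_K -> R) (c : 'I_K) : rho_min rho <= rho c.
Proof.
rewrite /rho_min; set m := (\big[mine/+oo]_(k < K) (rho k)%:E)%E.
have m_le : (m <= (rho c)%:E)%E by rewrite /m (bigD1 c) //= ge_min lexx.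
have m_fin : m \is a fin_num.
  rewrite fin_numE; apply/andP; split; last by apply: contraTneq m_le => ->.
  by apply: (big_ind (fun x => x != -oo)%E) => // x y; rewrite /Order.min; case: ifP.
by rewrite -lee_fin fineK.
Qed.

Lemma LnE (n : nat) (rm : R) : 0 <= rm ->
  Ln n rm = 2 * expR (- (n%:R * rm ^+ 2 / (8 * (1 + rm / 6)))).
Proof. by move=> rm0; rewrite /Ln; congr (_ * expR (- _)); field; lra. Qed.

Lemma expR_le_Ln (n : nat) (rm : R) : 0 <= rm ->
  expR (- (n%:R * rm ^+ 2 / 8)) <= Ln n rm.
Proof.
move=> rm0; rewrite LnE //.
set a := n%:R * rm ^+ 2.
have a0 : 0 <= a by rewrite mulr_ge0 ?sqr_ge0.
have : expR (- (a / 8)) <= expR (- (a / (8 * (1 + rm / 6)))).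
  rewrite ler_expR lerN2 ler_pdivrMr ?mulr_gt0 //; last by lra.
  rewrite mulrAC -mulrA ler_peMr ?divr_ge0 //; lra.
have := expR_ge0 (- (a / (8 * (1 + rm / 6)))); lra.
Qed.

Lemma binomial2_natr (k : nat) : ('C(k, 2) * 2)%:R = k%:R * (k%:R - 1) :> R.
Proof.
case: k => [|k]; first by rewrite bin0n mul0n mul0r.
by rewrite -[2%N]/(2`!) bin_ffact ffactnS ffactn1 natrM -natr1 addrK.
Qed.

Lemma lower_boundE (n k : nat) (rm : R) : (1 < k)%N -> 0 <= rm ->
  lower_bound n k rm =
  1 - expR (- (n%:R * rm ^+ 2 / (8 * (1 + rm / 6)) - ln (k%:R ^+ 2 * (k%:R - 1)))).
Proof.
move=> k_gt1 rm0; have k1 : 1 < k%:R :> R by rewrite ltr1n.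
rewrite /lower_bound LnE // opprB expRD lnK ?posrE; last first.
  by rewrite mulr_gt0 ?exprn_gt0 ?subr_gt0 //; lra.
set E := expR _; congr (_ - _).
have -> : 'C(k, 2)%:R * k%:R * (2 * E) = ('C(k, 2) * 2)%:R * k%:R * E by rewrite natrM; ring.
by rewrite binomial2_natr; ring.
Qed.

Lemma lower_bound_le (n k : nat) (rm : R) : (1 < k)%N ->
  lower_bound n k rm <= 1 - k%:R * Ln n rm.
Proof.
move=> k_gt1; rewrite lerB // -mulrA ler_peMl ?mulr_ge0 ?expR_ge0 //.
by rewrite ler1n bin_gt0.
Qed.

End LowerBound.

Section LabelProbability.
Variable R : realType.

Lemma label_prob_dBstar_lt_dPstar (n K : nat) (rho : 'I_K -> R) (B : 'M[R]_K)
    (gamma : R) :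
  (1 < K)%N -> (forall k, 0 <= rho k) -> \sum_(k < K) rho k = 1 ->
  0 < rho_min rho -> (forall a b : 'I_K, a != b -> row a B != row b B) ->
  0 < gamma ->
  1 - K%:R * Ln n (rho_min rho) <=
  label_prob rho (fun z : {ffun 'I_n -> 'I_K} =>
    ((gamma * Num.sqrt (Emin n (rho_min rho)))%:E * dBstar B < dPstar gamma B z)%E).
Proof.
move=> K_gt1 rho_ge0 rho_sum1 rm_gt0 rowsB gamma_gt0.
set rm := rho_min rho in rm_gt0 *.
rewrite (label_probC rho_sum1) lerD2l lerN2.
apply: le_trans (label_prob_union_bound rho_ge0
  (F := fun c z => community_size z c <= Emin n rm) _) _.
  move=> z notE; apply/existsP; apply: contraNT notE => /existsPn small.
  apply: (dBstar_lt_dPstar K_gt1 gamma_gt0 _ rowsB) => [|c].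
    by rewrite /Emin divr_ge0 // mulr_ge0 // ltW.
  by rewrite ltNge small.
rewrite [leRHS]mulr_natl -[in leRHS](card_ord K) -sumr_const.
apply: ler_sum => c _; apply: le_trans (expR_le_Ln n (ltW rm_gt0)).
exact: (community_size_tail n rho_ge0 rho_sum1 rm_gt0 (rho_min_le _ c)).
Qed.

Lemma lower_bound_cvg1 (K : nat -> nat) (rm : nat -> R) :
  (forall n, (1 < K n)%N) -> (forall n, 0 <= rm n) ->
  (fun n : nat => n%:R * rm n ^+ 2 / (8 * (1 + rm n / 6))
                  - ln ((K n)%:R ^+ 2 * ((K n)%:R - 1))) @ \oo --> +oo ->
  (fun n : nat => lower_bound n (K n) (rm n)) @ \oo --> (1 : R).
Proof.
move=> K_gt1 rm0 diverge.
rewrite (funext (fun n => lower_boundE n (K_gt1 n) (rm0 n))).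
rewrite -[X in _ --> X](subr0 1); apply: cvgB; first exact: cvg_cst.
exact: cvg_comp diverge (@cvgr_expR R).
Qed.

End LabelProbability.

Theorem lemma8 (R : realType) (K : nat -> nat)
  (rho : forall n : nat, 'I_(K n) -> R)
  (B : forall n : nat, 'M[R]_(K n))
  (gamma : nat -> R)
  (hK : forall n, (2 <= K n)%N)
  (hrho_ge0 : forall n k, 0 <= rho n k)
  (hrho_sum : forall n, \sum_(k < K n) rho n k = 1)
  (hrho_min : forall n, 0 < rho_min (rho n))
  (hB01 : forall n a b, 0 <= B n a b <= 1)
  (hBrows : forall n (a b : 'I_(K n)), a != b -> row a (B n) != row b (B n))
  (hgamma : forall n, 0 < gamma n <= 1) :
  (forall n : nat,
     label_prob (rho n)
       (fun z : {ffun 'I_n -> 'I_(K n)} =>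
          ((gamma n * Num.sqrt (Emin n (rho_min (rho n))))%:E * dBstar (B n)
             < dPstar (gamma n) (B n) z)%E)
     >= lower_bound n (K n) (rho_min (rho n)))
  /\
  ((fun n : nat =>
      n%:R * rho_min (rho n) ^+ 2 / (8 * (1 + rho_min (rho n) / 6))
      - ln ((K n)%:R ^+ 2 * ((K n)%:R - 1))) @ \oo --> +oo ->
   (fun n : nat => lower_bound n (K n) (rho_min (rho n))) @ \oo --> (1 : R)).
Proof.
split=> [n | ]; last by apply: lower_bound_cvg1 => // n; exact: ltW.
have [gamma_gt0 _] := andP (hgamma n).
apply: le_trans (lower_bound_le _ _ (hK n)) _.
exact: (label_prob_dBstar_lt_dPstar n (hK n) (hrho_ge0 n) (hrho_sum n) (hrho_min n)
  (hBrows n) gamma_gt0).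
Qed.
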